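(* Let $M\in\mathcal{I}$. Then $2\in M$ or $M$ is unbounded.
   Context: For a summable sequence $\mathbf{x}=(x_n)$ of positive reals, $\mathcal{A}(\mathbf{x})=\{\sum_{n\in A}x_n: A\subseteq\mathbb{N}\}$ is its achievement set and its cardinal function $f$ assigns to $x\in\mathcal{A}(\mathbf{x})$ the cardinality (a positive integer, $\omega$, or $\mathfrak{c}$) of $\{(\varepsilon_n)\in\{0,1\}^{\mathbb{N}}:\sum\varepsilon_nx_n=x\}$. $\mathcal{I}$ is the family of ranges of cardinal functions of such sequences whose achievement set is a finite union of (nondegenerate) closed intervals. A set $M\subseteq\{1,2,\dots\}\cup\{\omega,\mathfrak{c}\}$ is bounded if there is $N\in\mathbb{N}$ with $M\subseteq\{1,\dots,N\}$; otherwise it is unbounded. *)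

From Stdlib Require Import Reals List.
From Coquelicot Require Import Coquelicot.
Open Scope R_scope.

Definition subsum_is (x : nat -> R) (eps : nat -> bool) (y : R) : Prop :=
  is_series (fun n => if eps n then x n else 0) y.

Definition achievement_set (x : nat -> R) (y : R) : Prop :=
  exists eps : nat -> bool, subsum_is x eps y.

Definition reps (x : nat -> R) (y : R) (eps : nat -> bool) : Prop :=
  subsum_is x eps y.

Inductive CardVal : Type :=
  | CFin : nat -> CardVal
  | COmega : CardVal
  | CContinuum : CardVal.

Definition has_card (S : (nat -> bool) -> Prop) (k : CardVal) : Prop :=
  match k with
  | CFin n => exists l : list (nat -> bool),
      NoDup l /\ length l = n /\ (forall e, S e <-> In e l)
  | COmega => exists f : nat -> (nat -> bool),
      (forall i j, f i = f j -> i = j) /\ (forall e, S e <-> exists i, f i = e)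
  | CContinuum => exists g : (nat -> bool) -> (nat -> bool),
      (forall c d, g c = g d -> c = d) /\ (forall e, S e <-> exists c, g c = e)
  end.

Definition card_range (x : nat -> R) (k : CardVal) : Prop :=
  exists y, achievement_set x y /\ has_card (reps x y) k.

Definition finite_union_of_intervals (A : R -> Prop) : Prop :=
  exists l : list (R * R),
    (forall p, In p l -> fst p < snd p) /\
    (forall y, A y <-> exists p, In p l /\ fst p <= y <= snd p).

Definition pos_summable (x : nat -> R) : Prop :=
  (forall n, 0 < x n) /\ ex_series x.

Definition in_I (M : CardVal -> Prop) : Prop :=
  exists x, pos_summable x /\ finite_union_of_intervals (achievement_set x) /\
            (forall k, M k <-> card_range x k).

Definition bounded_cards (M : CardVal -> Prop) : Prop :=
  exists N : nat, forall k, M k -> exists n, k = CFin n /\ (1 <= n <= N)%nat.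

From Stdlib Require Import Reals List Lra Lia Classical ClassicalEpsilon FunctionalExtensionality FinFun.
From Coquelicot Require Import Coquelicot.
Open Scope R_scope.

(* Rearranging x does not change its cardinal function, so we may assume x nonincreasing.
   Since 0 is in A(x), some interval [0, b] lies in A(x), which forces Kakeya's condition
   x n <= tail (n + 1) for all large n, where tail n = x n + x (n + 1) + ...
   If equality holds at a strict drop x n < x (n - 1), then x n has exactly the two
   representations {n} and {n + 1, n + 2, ...}, so 2 is in the range. Otherwise the inequality
   is strict infinitely often, and splitting at such indices gives a Cantor scheme of prefixes
   whose reachable sums share nested intervals; the common point of these intervals has
   continuum many representations, so the range is unbounded. *)

Fixpoint psum (a : nat -> R) (p : nat) : R :=
  match p with O => 0 | S q => psum a q + a q end.

Lemma psum_ext (a b : nat -> R) p :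
  (forall n, (n < p)%nat -> a n = b n) -> psum a p = psum b p.
Proof.
  induction p as [|p IH]; intros Hab; simpl; auto.
  rewrite IH, Hab; auto; intros; apply Hab; lia.
Qed.

Lemma psum_eq0 (a : nat -> R) p : (forall n, (n < p)%nat -> a n = 0) -> psum a p = 0.
Proof.
  intros Ha. rewrite (psum_ext a (fun _ => 0)); auto. clear Ha. induction p; simpl; lra.
Qed.

Lemma psum_ge0 (a : nat -> R) p : (forall n, 0 <= a n) -> 0 <= psum a p.
Proof. intros Ha; induction p; simpl; [lra | specialize (Ha p); lra]. Qed.

Lemma psum_sum_f_R0 (a : nat -> R) n : psum a (S n) = sum_f_R0 a n.
Proof. induction n; simpl in *; [ring | rewrite <- IHn; ring]. Qed.

Lemma is_series_zero : is_series (fun _ : nat => 0) 0.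
Proof.
  apply is_series_Reals. intros eps Heps. exists 0%nat. intros n _.
  rewrite <- psum_sum_f_R0, psum_eq0; auto. unfold R_dist. rewrite Rminus_0_r, Rabs_R0. lra.
Qed.

Lemma Series_zero : Series (fun _ : nat => 0) = 0.
Proof. apply is_series_unique, is_series_zero. Qed.

Lemma Series_split (a : nat -> R) p : ex_series a ->
  Series a = psum a p + Series (fun k => a (p + k)%nat).
Proof.
  intros Ha. induction p as [|p IH]; simpl.
  - rewrite Rplus_0_l. reflexivity.
  - rewrite IH, (Series_incr_1 (fun k => a (p + k)%nat)).
    + rewrite Nat.add_0_r, Rplus_assoc. do 2 f_equal.
      apply Series_ext. intros n. f_equal. lia.
    + apply ex_series_incr_n, Ha.
Qed.

Lemma ex_series_nonneg_le (a b : nat -> R) :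
  (forall n, 0 <= a n <= b n) -> ex_series b -> ex_series a.
Proof.
  intros Hab Hb. apply (ex_series_le a b); auto. intros n.
  change (norm (a n)) with (Rabs (a n)). rewrite Rabs_pos_eq; apply Hab.
Qed.

Lemma Series_ge0 (a : nat -> R) : (forall n, 0 <= a n) -> ex_series a -> 0 <= Series a.
Proof.
  intros Ha Hex. rewrite <- Series_zero. apply Series_le; auto. intros n; split; [lra | auto].
Qed.

Lemma psum_le_Series (a : nat -> R) p :
  (forall n, 0 <= a n) -> ex_series a -> psum a p <= Series a.
Proof.
  intros Ha Hex. rewrite (Series_split a p Hex).
  assert (0 <= Series (fun k => a (p + k)%nat)).
  { apply Series_ge0; [auto | apply ex_series_incr_n, Hex]. }
  lra.
Qed.

Lemma term_le_Series (a : nat -> R) j :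
  (forall n, 0 <= a n) -> ex_series a -> a j <= Series a.
Proof.
  intros Ha Hex. pose proof (psum_le_Series a (S j) Ha Hex). simpl in H.
  pose proof (psum_ge0 a j Ha). lra.
Qed.

Lemma ex_series_psum_bounded (a : nat -> R) B :
  (forall n, 0 <= a n) -> (forall p, psum a p <= B) -> ex_series a /\ Series a <= B.
Proof.
  intros Ha HB.
  destruct (growing_cv (sum_f_R0 a)) as [l Hl].
  - intros n. simpl. specialize (Ha (S n)). lra.
  - exists B. intros y [n ->]. rewrite <- psum_sum_f_R0. auto.
  - assert (Hs : is_series a l).
    { apply is_series_Reals. intros eps Heps. destruct (Hl eps Heps) as [N HN].
      exists N. intros n Hn. apply HN. lia. }
    split; [exists l; auto |].
    rewrite (is_series_unique a l Hs).
    destruct (Rle_dec l B) as [|Hlt]; auto. exfalso.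
    destruct (Hl (l - B)) as [N HN]; [lra |].
    specialize (HN N (Nat.le_refl N)). specialize (HB (S N)). rewrite psum_sum_f_R0 in HB.
    unfold R_dist in HN. rewrite Rabs_left1 in HN; lra.
Qed.

Lemma eq_of_Rabs_le_vanishing (u v : R) (r : nat -> R) :
  (forall eps, 0 < eps -> exists N, r N < eps) -> (forall k, Rabs (u - v) <= r k) -> u = v.
Proof.
  intros Hr Hk. destruct (Req_dec u v) as [|Hne]; auto. exfalso.
  assert (Hpos : 0 < Rabs (u - v)) by (apply Rabs_pos_lt; lra).
  destruct (Hr _ Hpos) as [N HN]. specialize (Hk N). lra.
Qed.

Definition drop (a : nat -> R) (j : nat) (i : nat) : R :=
  if Nat.eq_dec i j then 0 else a i.

Lemma Series_drop (a : nat -> R) j : ex_series a ->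
  ex_series (drop a j) /\ Series a = a j + Series (drop a j).
Proof.
  intros Hex.
  assert (Htail : forall k, drop a j (S j + k) = a (S j + k)%nat).
  { intros k. unfold drop. destruct (Nat.eq_dec (S j + k) j); [lia | reflexivity]. }
  assert (Hd : ex_series (drop a j)).
  { apply (ex_series_incr_n _ (S j)).
    apply (ex_series_ext (fun k => a (S j + k)%nat)); [intros; auto | apply ex_series_incr_n, Hex]. }
  split; auto.
  rewrite (Series_split a (S j) Hex), (Series_split _ (S j) Hd), (Series_ext _ _ Htail). simpl.
  rewrite (psum_ext (drop a j) a j).
  - unfold drop. destruct (Nat.eq_dec j j); [ring | congruence].
  - intros n Hn. unfold drop. destruct (Nat.eq_dec n j); [lia | reflexivity].
Qed.

Fixpoint sumL (a : nat -> R) (l : list nat) : R :=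
  match l with nil => 0 | j :: l' => a j + sumL a l' end.

Lemma sumL_ext (a b : nat -> R) l : (forall n, In n l -> a n = b n) -> sumL a l = sumL b l.
Proof.
  induction l as [|j l IH]; intros Hab; simpl; auto.
  rewrite (Hab j), IH; [reflexivity | |].
  - intros n Hn. apply Hab. right; exact Hn.
  - left; reflexivity.
Qed.

Lemma sumL_le_Series (a : nat -> R) l :
  (forall n, 0 <= a n) -> ex_series a -> NoDup l -> sumL a l <= Series a.
Proof.
  revert a. induction l as [|j l IH]; intros a Ha Hex Hnd; simpl.
  - apply Series_ge0; auto.
  - inversion Hnd as [|? ? Hj Hl]; subst.
    destruct (Series_drop a j Hex) as [Hd ->].
    rewrite (sumL_ext a (drop a j)).
    + apply Rplus_le_compat_l, IH; auto.
      intros n; unfold drop; destruct (Nat.eq_dec n j); [lra | auto].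
    + intros n Hn. unfold drop. destruct (Nat.eq_dec n j); [subst; contradiction | auto].
Qed.

Lemma sumL_app (a : nat -> R) l l' : sumL a (l ++ l') = sumL a l + sumL a l'.
Proof. induction l as [|j l IH]; simpl; [ring | rewrite IH; ring]. Qed.

Lemma sumL_map_seq (a : nat -> R) (s : nat -> nat) N :
  sumL a (map s (seq 0 N)) = psum (fun k => a (s k)) N.
Proof.
  induction N as [|N IH]; [reflexivity |].
  rewrite seq_S, map_app, sumL_app, IH. simpl. ring.
Qed.

Lemma Series_comp_inj_le (a : nat -> R) (s : nat -> nat) :
  (forall n, 0 <= a n) -> ex_series a -> Injective s ->
  ex_series (fun k => a (s k)) /\ Series (fun k => a (s k)) <= Series a.
Proof.
  intros Ha Hex Hs. apply ex_series_psum_bounded; [auto |].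
  intros N. rewrite <- sumL_map_seq. apply sumL_le_Series; auto.
  apply Injective_map_NoDup; [exact Hs | apply seq_NoDup].
Qed.

Lemma is_series_comp_bij (a : nat -> R) (s t : nat -> nat) y :
  (forall n, 0 <= a n) -> (forall n, s (t n) = n) -> (forall n, t (s n) = n) ->
  is_series a y -> is_series (fun k => a (s k)) y.
Proof.
  intros Ha Hst Hts Hy.
  assert (Hs : Injective s) by (intros i j E; rewrite <- (Hts i), E; auto).
  assert (Ht : Injective t) by (intros i j E; rewrite <- (Hst i), E; auto).
  destruct (Series_comp_inj_le a s Ha (ex_intro _ y Hy) Hs) as [Hex1 H1].
  destruct (Series_comp_inj_le (fun k => a (s k)) t (fun n => Ha (s n)) Hex1 Ht) as [_ H2].
  rewrite (Series_ext _ a) in H2 by (intros n; rewrite Hst; auto).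
  rewrite (is_series_unique _ _ Hy) in H1, H2.
  replace y with (Series (fun k => a (s k))) by lra. apply Series_correct, Hex1.
Qed.

Lemma psum_glue (a b : nat -> R) p q : (p <= q)%nat -> (forall n, (n < p)%nat -> b n = 0) ->
  psum (fun i => if (i <? p)%nat then a i else b i) q = psum a p + psum b q.
Proof.
  intros Hpq Hb. induction Hpq as [| q Hpq IH]; simpl.
  - rewrite (psum_eq0 b p Hb), Rplus_0_r. apply psum_ext. intros n Hn.
    destruct (Nat.ltb_spec n p); [auto | lia].
  - rewrite IH. destruct (Nat.ltb_spec q p); [lia | ring].
Qed.

Lemma nested_intervals (lo hi : nat -> R) :
  (forall d, lo d <= lo (S d)) -> (forall d, hi (S d) <= hi d) -> (forall d, lo d <= hi d) ->
  exists p, forall d, lo d <= p <= hi d.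
Proof.
  intros Hlo Hhi Hle.
  assert (Hlo_mono : forall d d', (d <= d')%nat -> lo d <= lo d')
    by (intros d d' H; induction H; [lra | specialize (Hlo m); lra]).
  assert (Hhi_mono : forall d d', (d <= d')%nat -> hi d' <= hi d)
    by (intros d d' H; induction H; [lra | specialize (Hhi m); lra]).
  assert (Hcross : forall k d, lo k <= hi d).
  { intros k d. destruct (Nat.le_ge_cases k d) as [H | H].
    - specialize (Hlo_mono k d H). specialize (Hle d). lra.
    - specialize (Hhi_mono d k H). specialize (Hle k). lra. }
  destruct (growing_cv lo Hlo) as [p Hp].
  { exists (hi O). intros y [n ->]. apply Hcross. }
  exists p. intros d. split.
  - apply (growing_ineq lo); auto.
  - destruct (Rle_dec p (hi d)) as [| Hgt]; auto. exfalso.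
    destruct (Hp (p - hi d)) as [N HN]; [lra |].
    specialize (HN N (Nat.le_refl N)). specialize (Hcross N d).
    unfold R_dist in HN. rewrite Rabs_left1 in HN; lra.
Qed.

Lemma first_difference (w w' : nat -> bool) : w <> w' ->
  exists d, w d <> w' d /\ forall k, (k < d)%nat -> w k = w' k.
Proof.
  intros Hne.
  assert (Hex : exists d, w d <> w' d).
  { apply NNPP. intros Hno. apply Hne, functional_extensionality. intros k.
    apply NNPP. intros Hk. apply Hno. eauto. }
  destruct Hex as [d0 Hd0]. induction d0 as [d0 IH] using (well_founded_induction Wf_nat.lt_wf).
  destruct (classic (exists k, (k < d0)%nat /\ w k <> w' k)) as [[k [Hk Hwk]] | Hno].
  - exact (IH k Hk Hwk).
  - exists d0. split; auto. intros k Hk. apply NNPP. intros Hwk. apply Hno. eauto.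
Qed.

Section DecreasingRearrangement.

Variable x : nat -> R.
Hypothesis x_pos : forall n, 0 < x n.
Hypothesis x_lim : is_lim_seq x 0.

Lemma large_terms_bounded j : exists K, forall i, x j <= x i -> (i < K)%nat.
Proof.
  apply is_lim_seq_spec in x_lim.
  destruct (x_lim (mkposreal _ (x_pos j))) as [K HK]. exists K.
  intros i Hi. destruct (Nat.lt_ge_cases i K) as [|HiK]; auto. exfalso.
  specialize (HK i HiK). simpl in HK. rewrite Rminus_0_r, Rabs_pos_eq in HK; [lra |].
  apply Rlt_le, x_pos.
Qed.

Lemma exists_max_below (l : list nat) K : (exists i, (i < K)%nat /\ ~ In i l) ->
  exists j, (j < K)%nat /\ ~ In j l /\ forall i, (i < K)%nat -> ~ In i l -> x i <= x j.
Proof.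
  induction K as [|K IH]; intros [i0 [Hi0 Hni0]]; [lia |].
  destruct (classic (exists i, (i < K)%nat /\ ~ In i l)) as [Hex | Hno].
  - destruct (IH Hex) as [j [HjK [Hjl Hmax]]].
    destruct (classic (~ In K l /\ x j < x K)) as [[HKl HjK'] | HK].
    + exists K. repeat split; auto. intros i Hi Hil.
      destruct (Nat.eq_dec i K); [subst; lra |]. specialize (Hmax i ltac:(lia) Hil). lra.
    + exists j. repeat split; auto. intros i Hi Hil.
      destruct (Nat.eq_dec i K) as [->|]; [| apply Hmax; auto; lia].
      apply Rnot_lt_le. intros Hlt. apply HK. auto.
  - assert (HKl : ~ In K l).
    { intros HK. apply Hno. exists i0. split; auto.
      destruct (Nat.eq_dec i0 K); [subst; contradiction | lia]. }
    exists K. repeat split; auto. intros i Hi Hil.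
    destruct (Nat.eq_dec i K); [subst; lra |]. exfalso. apply Hno. exists i; split; auto; lia.
Qed.

Lemma exists_max_outside (l : list nat) :
  exists j, ~ In j l /\ forall i, ~ In i l -> x i <= x j.
Proof.
  set (j0 := S (list_max l)).
  assert (Hj0 : ~ In j0 l).
  { intros Hin. pose proof (proj1 (list_max_le l _) (Nat.le_refl _)) as Hall.
    rewrite Forall_forall in Hall. specialize (Hall _ Hin). unfold j0 in Hall. lia. }
  destruct (large_terms_bounded j0) as [K HK].
  assert (Hj0K : (j0 < K)%nat) by (apply HK; lra).
  destruct (exists_max_below l K) as [j [_ [Hjl Hmax]]]; [eauto |].
  exists j. split; auto. intros i Hil.
  destruct (Nat.lt_ge_cases i K) as [|HiK]; [apply Hmax; auto |].
  specialize (Hmax j0 Hj0K Hj0).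
  destruct (Rle_dec (x j0) (x i)) as [Hle |]; [specialize (HK i Hle); lia | lra].
Qed.

Definition next_largest (l : list nat) : nat :=
  proj1_sig (constructive_indefinite_description _ (exists_max_outside l)).

Lemma next_largest_spec l :
  ~ In (next_largest l) l /\ forall i, ~ In i l -> x i <= x (next_largest l).
Proof. unfold next_largest. destruct (constructive_indefinite_description _ _); auto. Qed.

Fixpoint sorted_prefix (k : nat) : list nat :=
  match k with O => nil | S k => sorted_prefix k ++ next_largest (sorted_prefix k) :: nil end.

Definition sort_index (k : nat) : nat := next_largest (sorted_prefix k).

Lemma in_sorted_prefix k j : In j (sorted_prefix k) <-> exists i, (i < k)%nat /\ sort_index i = j.
Proof.
  induction k as [|k IH]; simpl.
  - split; [tauto | intros [i [Hi _]]; lia].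
  - rewrite in_app_iff, IH. simpl. split.
    + intros [[i [Hi Hj]] | [Hj | []]]; [exists i; split; auto; lia | exists k; auto].
    + intros [i [Hi Hj]]. destruct (Nat.eq_dec i k) as [->|]; [auto |].
      left. exists i; split; auto; lia.
Qed.

Lemma sort_index_inj : Injective sort_index.
Proof.
  assert (Hlt : forall i j, (i < j)%nat -> sort_index i <> sort_index j).
  { intros i j Hij Heq. apply (proj1 (next_largest_spec (sorted_prefix j))).
    apply in_sorted_prefix. exists i. auto. }
  intros i j Heq. destruct (Nat.lt_total i j) as [|[|]]; auto.
  - exfalso; eapply Hlt; eauto.
  - exfalso; eapply Hlt; eauto.
Qed.

Lemma sort_index_nonincr k : x (sort_index (S k)) <= x (sort_index k).
Proof.
  apply (proj2 (next_largest_spec (sorted_prefix k))). intros Hin.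
  apply (proj1 (next_largest_spec (sorted_prefix (S k)))).
  simpl. apply in_or_app; left; auto.
Qed.

Lemma sort_index_surj n : exists k, sort_index k = n.
Proof.
  apply NNPP. intros Hno.
  destruct (large_terms_bounded n) as [K HK].
  assert (Hbound : forall k, (sort_index k < K)%nat).
  { intros k. apply HK, (proj2 (next_largest_spec (sorted_prefix k))).
    intros Hin. apply in_sorted_prefix in Hin. destruct Hin as [i [_ Hi]]. eauto. }
  assert (Hnd : NoDup (map sort_index (seq 0 (S K))))
    by (apply Injective_map_NoDup; [exact sort_index_inj | apply seq_NoDup]).
  assert (Hincl : incl (map sort_index (seq 0 (S K))) (seq 0 K)).
  { intros j Hj. apply in_map_iff in Hj. destruct Hj as [k [<- _]].
    apply in_seq. split; [lia | apply Hbound]. }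
  pose proof (NoDup_incl_length Hnd Hincl) as Hlen.
  rewrite length_map, !length_seq in Hlen. lia.
Qed.

End DecreasingRearrangement.

Lemma exists_nonincreasing_rearrangement (x : nat -> R) :
  (forall n, 0 < x n) -> is_lim_seq x 0 ->
  exists s t : nat -> nat, (forall n, s (t n) = n) /\ (forall n, t (s n) = n) /\
    forall k, x (s (S k)) <= x (s k).
Proof.
  intros Hpos Hlim. set (s := sort_index x Hpos Hlim).
  destruct (choice _ (sort_index_surj x Hpos Hlim)) as [t Ht].
  exists s, t. split; [exact Ht |]. split.
  - intros n. apply (sort_index_inj x Hpos Hlim). apply Ht.
  - apply sort_index_nonincr.
Qed.

Lemma has_card_bij (P P' : (nat -> bool) -> Prop) (Phi Psi : (nat -> bool) -> nat -> bool) k :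
  (forall e, Psi (Phi e) = e) -> (forall f, Phi (Psi f) = f) ->
  (forall e, P e <-> P' (Phi e)) -> has_card P' k -> has_card P k.
Proof.
  intros HPsi HPhi HP.
  assert (Hinj : Injective Psi) by (intros f g E; rewrite <- (HPhi f), E; auto).
  assert (HP' : forall e, P e <-> exists f, P' f /\ Psi f = e).
  { intros e. rewrite HP. split; [intros; exists (Phi e); auto | intros [f [Hf <-]]; rewrite HPhi; auto]. }
  destruct k; simpl.
  - intros [l [Hnd [Hlen Hl]]]. exists (map Psi l). repeat split.
    + apply Injective_map_NoDup; auto.
    + rewrite length_map; auto.
    + intros He. apply HP' in He. destruct He as [f [Hf <-]]. apply in_map, Hl, Hf.
    + intros Hin. apply in_map_iff in Hin. destruct Hin as [f [<- Hf]].
      apply HP'. exists f. split; [apply Hl |]; auto.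
  - intros [g [Hg Hl]]. exists (fun i => Psi (g i)). split.
    + intros i j E. apply Hg, Hinj, E.
    + intros e. rewrite HP'. split.
      * intros [f [Hf <-]]. apply Hl in Hf. destruct Hf as [i <-]. eauto.
      * intros [i <-]. exists (g i). split; auto. apply Hl. eauto.
  - intros [g [Hg Hl]]. exists (fun c => Psi (g c)). split.
    + intros c d E. apply Hg, Hinj, E.
    + intros e. rewrite HP'. split.
      * intros [f [Hf <-]]. apply Hl in Hf. destruct Hf as [c <-]. eauto.
      * intros [c <-]. exists (g c). split; auto. apply Hl. eauto.
Qed.

Lemma reps_comp_bij (x : nat -> R) (s t : nat -> nat) y e :
  (forall n, 0 < x n) -> (forall n, s (t n) = n) -> (forall n, t (s n) = n) ->
  reps x y e <-> reps (fun k => x (s k)) y (fun k => e (s k)).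
Proof.
  intros Hpos Hst Hts. unfold reps, subsum_is.
  assert (Hnn : forall (f : nat -> bool) n, 0 <= if f n then x n else 0).
  { intros f n. destruct (f n); [apply Rlt_le, Hpos | lra]. }
  split; intros H.
  - apply (is_series_comp_bij (fun n => if e n then x n else 0) s t); auto.
  - apply (is_series_comp_bij _ t s) in H; auto.
    eapply is_series_ext; [| exact H]. intros n; simpl. rewrite Hst. reflexivity.
Qed.

Lemma card_range_comp_bij (x : nat -> R) (s t : nat -> nat) k :
  (forall n, 0 < x n) -> (forall n, s (t n) = n) -> (forall n, t (s n) = n) ->
  card_range (fun n => x (s n)) k -> card_range x k.
Proof.
  intros Hpos Hst Hts [y [[f Hf] Hk]].
  assert (Hreps : forall e, reps x y e <-> reps (fun n => x (s n)) y (fun n => e (s n)))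
    by (intros; apply (reps_comp_bij x s t); auto).
  assert (Hback : forall g : nat -> bool, (fun n => g (t (s n))) = g)
    by (intros g; apply functional_extensionality; intros n; rewrite Hts; auto).
  exists y. split.
  - exists (fun n => f (t n)). apply Hreps. rewrite Hback. exact Hf.
  - apply (has_card_bij _ (reps (fun n => x (s n)) y) (fun e n => e (s n)) (fun f n => f (t n))); auto.
    intros e. apply functional_extensionality. intros n. rewrite Hst. reflexivity.
Qed.

(* Cantor-Schroeder-Bernstein: [g] shifts along [T] exactly the [T]-chains starting outside [P]. *)
Lemma has_card_continuum_of_inj (P : (nat -> bool) -> Prop) (T : (nat -> bool) -> nat -> bool) :
  Injective T -> (forall a, P (T a)) -> has_card P CContinuum.
Proof.
  intros Hinj HS.
  set (C := fun a => exists n a0, ~ P a0 /\ Nat.iter n T a0 = a).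
  assert (CT : forall a, C a -> C (T a)).
  { intros a [n [a0 [H1 H2]]]. exists (S n), a0. simpl. rewrite H2. auto. }
  set (g := fun a => if excluded_middle_informative (C a) then T a else a).
  exists g. split.
  - intros a b Hab. unfold g in Hab.
    destruct (excluded_middle_informative (C a)) as [Ca | Ca];
    destruct (excluded_middle_informative (C b)) as [Cb | Cb]; auto.
    + exfalso. apply Cb. rewrite <- Hab. auto.
    + exfalso. apply Ca. rewrite Hab. auto.
  - intros e. split.
    + intros Pe. destruct (excluded_middle_informative (C e)) as [[[|n] [a0 [H1 H2]]] | Ce].
      * simpl in H2. subst. contradiction.
      * exists (Nat.iter n T a0). unfold g.
        destruct (excluded_middle_informative (C (Nat.iter n T a0))) as [| Hn]; [auto |].
        exfalso. apply Hn. exists n, a0. auto.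
      * exists e. unfold g. destruct (excluded_middle_informative (C e)); [contradiction | auto].
    + intros [a <-]. unfold g. destruct (excluded_middle_informative (C a)) as [| Ca]; auto.
      apply NNPP. intros Hn. apply Ca. exists 0%nat, a. auto.
Qed.

Section Nonincreasing.

Variable x : nat -> R.
Hypothesis x_pos : forall n, 0 < x n.
Hypothesis x_sum : ex_series x.
Hypothesis x_nonincr : forall n, x (S n) <= x n.

Definition chosen (e : nat -> bool) (n : nat) : R := if e n then x n else 0.
Definition val (e : nat -> bool) : R := Series (chosen e).
Definition tail (n : nat) : R := Series (fun k => x (n + k)%nat).
Definition chosen_tail (e : nat -> bool) (p : nat) : R := Series (fun k => chosen e (p + k)%nat).

Lemma chosen_bounds e n : 0 <= chosen e n <= x n.
Proof. unfold chosen. destruct (e n); specialize (x_pos n); lra. Qed.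

Lemma ex_series_chosen e : ex_series (chosen e).
Proof. apply (ex_series_nonneg_le _ x); auto. apply chosen_bounds. Qed.

Lemma reps_iff_val y e : reps x y e <-> val e = y.
Proof.
  split; intros H.
  - apply is_series_unique, H.
  - rewrite <- H. apply Series_correct, ex_series_chosen.
Qed.

Lemma x_antitone i j : (i <= j)%nat -> x j <= x i.
Proof. intros H; induction H; [lra | specialize (x_nonincr m); lra]. Qed.

Lemma tail_succ n : tail n = x n + tail (S n).
Proof.
  unfold tail. rewrite (Series_incr_1 (fun k => x (n + k)%nat)).
  - rewrite Nat.add_0_r. f_equal. apply Series_ext. intros k. f_equal. lia.
  - apply ex_series_incr_n, x_sum.
Qed.

Lemma tail_ge0 n : 0 <= tail n.
Proof. apply Series_ge0; [intros; apply Rlt_le, x_pos | apply ex_series_incr_n, x_sum]. Qed.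

Lemma tail_antitone n m : (n <= m)%nat -> tail m <= tail n.
Proof.
  intros H; induction H; [lra |].
  pose proof (tail_succ m). specialize (x_pos m). lra.
Qed.

Lemma tail_vanishing eps : 0 < eps -> exists N, forall n, (N <= n)%nat -> tail n < eps.
Proof.
  intros Heps. pose proof (Series_correct _ x_sum) as Hx.
  apply is_series_Reals in Hx. destruct (Hx eps Heps) as [N HN].
  exists (S N). intros n Hn. apply (Rle_lt_trans _ (tail (S N))); [apply tail_antitone, Hn |].
  specialize (HN N (Nat.le_refl N)). rewrite <- psum_sum_f_R0 in HN.
  unfold R_dist, tail in HN. rewrite (Series_split x (S N) x_sum) in HN.
  replace (psum x (S N) - (psum x (S N) + Series (fun k => x (S N + k)%nat)))
    with (- tail (S N)) in HN by (unfold tail; ring).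
  rewrite Rabs_Ropp, Rabs_pos_eq in HN; [exact HN | apply tail_ge0].
Qed.

Lemma val_split e p : val e = psum (chosen e) p + chosen_tail e p.
Proof. apply Series_split, ex_series_chosen. Qed.

Lemma chosen_tail_bounds e p : 0 <= chosen_tail e p <= tail p.
Proof.
  split.
  - apply Series_ge0; [intros; apply chosen_bounds | apply ex_series_incr_n, ex_series_chosen].
  - apply Series_le; [intros; apply chosen_bounds | apply ex_series_incr_n, x_sum].
Qed.

Lemma term_le_val e i : e i = true -> x i <= val e.
Proof.
  intros Hi. replace (x i) with (chosen e i) by (unfold chosen; rewrite Hi; auto).
  apply term_le_Series; [apply chosen_bounds | apply ex_series_chosen].
Qed.

Lemma val_add_term_le e f j : (forall n, e n = true -> f n = true) ->
  e j = false -> f j = true -> val e + x j <= val f.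
Proof.
  intros Hef Hej Hfj.
  assert (Hdiff : forall n, 0 <= chosen f n - chosen e n <= x n).
  { intros n. unfold chosen. specialize (x_pos n). specialize (Hef n).
    destruct (e n), (f n); try discriminate (Hef eq_refl); lra. }
  pose proof (term_le_Series _ j (fun n => proj1 (Hdiff n))
               (ex_series_nonneg_le _ _ Hdiff x_sum)) as Hj.
  rewrite Series_minus in Hj by apply ex_series_chosen.
  unfold chosen at 1 2 in Hj. rewrite Hfj, Hej in Hj. unfold val. lra.
Qed.

Lemma val_lt_term_zero e j : val e < x j -> forall i, (i <= j)%nat -> e i = false.
Proof.
  intros Hlt i Hi. destruct (e i) eqn:Ei; auto. exfalso.
  pose proof (term_le_val e i Ei). pose proof (x_antitone i j Hi). lra.
Qed.

(* Kakeya's condition: if [x n] were larger than the tail after it, no subsum would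
   land in the gap between the two, contradicting [[0, b] ⊆ A(x)]. *)
Lemma kakeya_eventually b : 0 < b -> (forall u, 0 <= u <= b -> achievement_set x u) ->
  exists n0, forall n, (n0 <= n)%nat -> x n <= tail (S n).
Proof.
  intros Hb Hach.
  pose proof (proj2 (is_lim_seq_spec x 0) (ex_series_lim_0 x x_sum)) as Hlim.
  destruct (Hlim (mkposreal b Hb)) as [n0 Hn0]. exists n0. intros n Hn.
  specialize (Hn0 n Hn). simpl in Hn0.
  rewrite Rminus_0_r, Rabs_pos_eq in Hn0 by apply Rlt_le, x_pos.
  destruct (Rle_dec (x n) (tail (S n))) as [| Hgap]; auto. exfalso.
  pose proof (tail_ge0 (S n)).
  set (u := (x n + tail (S n)) / 2).
  destruct (Hach u ltac:(unfold u; lra)) as [e He]. apply reps_iff_val in He.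
  pose proof (val_lt_term_zero e n ltac:(unfold u in *; lra)) as Hzero.
  rewrite (val_split e (S n)), psum_eq0 in He.
  - pose proof (chosen_tail_bounds e (S n)). unfold u in He. lra.
  - intros i Hi. unfold chosen. rewrite Hzero; [auto | lia].
Qed.

(* The remaining target after the greedy expansion of [t] has decided the indices
   [m, ..., m + k - 1], taking each term that still fits. *)
Fixpoint greedy_rest (m : nat) (t : R) (k : nat) : R :=
  match k with
  | O => t
  | S k => if Rle_dec (x (m + k)) (greedy_rest m t k)
           then greedy_rest m t k - x (m + k) else greedy_rest m t k
  end.

Definition greedy (m : nat) (t : R) (i : nat) : bool :=
  if (i <? m)%nat then false else if Rle_dec (x i) (greedy_rest m t (i - m)) then true else false.

Section Greedy.

Variables (m : nat) (t : R).
Hypothesis kakeya_from_m : forall n, (m <= n)%nat -> x n <= tail (S n).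
Hypothesis t_range : 0 <= t <= tail m.

Lemma greedy_rest_bounds k : 0 <= greedy_rest m t k <= tail (m + k).
Proof.
  induction k as [|k IH]; simpl.
  - rewrite Nat.add_0_r. exact t_range.
  - replace (m + S k)%nat with (S (m + k)) by lia.
    pose proof (tail_succ (m + k)). pose proof (kakeya_from_m (m + k) ltac:(lia)).
    destruct (Rle_dec _ _); lra.
Qed.

Lemma greedy_below i : (i < m)%nat -> greedy m t i = false.
Proof. intros Hi. unfold greedy. destruct (Nat.ltb_spec i m); [auto | lia]. Qed.

Lemma psum_greedy k : psum (chosen (greedy m t)) (m + k) = t - greedy_rest m t k.
Proof.
  induction k as [|k IH].
  - rewrite Nat.add_0_r, psum_eq0; [simpl; ring |].
    intros i Hi. unfold chosen. rewrite greedy_below; auto.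
  - replace (m + S k)%nat with (S (m + k)) by lia. simpl psum. rewrite IH.
    unfold chosen, greedy. destruct (Nat.ltb_spec (m + k) m); [lia |].
    replace (m + k - m)%nat with k by lia. simpl.
    destruct (Rle_dec (x (m + k)) (greedy_rest m t k)); ring.
Qed.

Lemma val_greedy : val (greedy m t) = t.
Proof.
  apply (eq_of_Rabs_le_vanishing _ _ (fun k => 2 * tail (m + k))).
  - intros eps Heps. destruct (tail_vanishing (eps / 2) ltac:(lra)) as [N HN].
    exists N. specialize (HN (m + N)%nat ltac:(lia)). lra.
  - intros k. rewrite (val_split _ (m + k)), psum_greedy.
    pose proof (chosen_tail_bounds (greedy m t) (m + k)). pose proof (greedy_rest_bounds k).
    unfold Rabs; destruct (Rcase_abs _); lra.
Qed.

End Greedy.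

Definition only (n i : nat) : bool := Nat.eqb i n.
Definition after (n i : nat) : bool := Nat.ltb n i.

Lemma val_only n : val (only n) = x n.
Proof.
  rewrite (val_split _ (S n)). simpl. rewrite psum_eq0.
  - unfold chosen_tail. rewrite (Series_ext _ (fun _ => 0)), Series_zero.
    + unfold chosen, only. rewrite Nat.eqb_refl. ring.
    + intros k. unfold chosen, only. destruct (Nat.eqb_spec (S n + k) n); [lia | auto].
  - intros i Hi. unfold chosen, only. destruct (Nat.eqb_spec i n); [lia | auto].
Qed.

Lemma val_after n : val (after n) = tail (S n).
Proof.
  rewrite (val_split _ (S n)), psum_eq0.
  - rewrite Rplus_0_l. apply Series_ext. intros k. unfold chosen, after.
    destruct (Nat.ltb_spec n (S n + k)); [auto | lia].
  - intros i Hi. unfold chosen, after. destruct (Nat.ltb_spec n i); [lia | auto].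
Qed.

Lemma reps_equality_case n : (1 <= n)%nat -> x n < x (n - 1) -> x n = tail (S n) ->
  forall e, reps x (x n) e <-> e = only n \/ e = after n.
Proof.
  intros Hn Hdrop Heq e. rewrite reps_iff_val. split.
  - intros He.
    assert (Hlow : forall i, (i < n)%nat -> e i = false).
    { intros i Hi. apply (val_lt_term_zero e (n - 1)); [lra | lia]. }
    destruct (e n) eqn:En; [left | right]; apply functional_extensionality; intros i.
    + unfold only. destruct (Nat.eqb_spec i n) as [-> | Hin]; auto.
      destruct (Nat.lt_ge_cases i n); [auto |].
      destruct (e i) eqn:Ei; auto. exfalso.
      assert (Hsub : forall k, only n k = true -> e k = true)
        by (intros k Hk; apply Nat.eqb_eq in Hk; subst; auto).
      pose proof (val_add_term_le (only n) e i Hsub (proj2 (Nat.eqb_neq i n) Hin) Ei) as Hle.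
      rewrite val_only in Hle. specialize (x_pos i). lra.
    + unfold after. destruct (Nat.ltb_spec n i) as [Hni | Hin].
      * destruct (e i) eqn:Ei; auto. exfalso.
        assert (Hsub : forall k, e k = true -> after n k = true).
        { intros k Hk. apply Nat.ltb_lt.
          destruct (Nat.lt_total n k) as [| [-> | Hkn]]; auto; [congruence |].
          rewrite Hlow in Hk; [discriminate | auto]. }
        pose proof (val_add_term_le e (after n) i Hsub Ei (proj2 (Nat.ltb_lt n i) Hni)) as Hle.
        rewrite val_after in Hle. specialize (x_pos i). lra.
      * destruct (Nat.eq_dec i n) as [-> |]; [auto | apply Hlow; lia].
  - intros [-> | ->]; [apply val_only | rewrite val_after; auto].
Qed.

Lemma card_range_equality_case n : (1 <= n)%nat -> x n < x (n - 1) -> x n = tail (S n) ->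
  card_range x (CFin 2).
Proof.
  intros Hn Hdrop Heq. pose proof (reps_equality_case n Hn Hdrop Heq) as Hreps.
  exists (x n). split; [exists (only n); apply Hreps; auto |].
  exists (only n :: after n :: nil). repeat split.
  - constructor; [| constructor; [simpl; tauto | constructor]].
    intros [Hoa | []]. assert (Hn' : only n n = after n n) by (rewrite Hoa; auto).
    unfold only, after in Hn'. rewrite Nat.eqb_refl, Nat.ltb_irrefl in Hn'. discriminate.
  - intros He. apply Hreps in He. simpl. destruct He; auto.
  - intros Hin. apply Hreps. simpl in Hin. destruct Hin as [<- | [<- | []]]; auto.
Qed.

Section CantorScheme.

Variable n0 : nat.
Hypothesis kakeya : forall n, (n0 <= n)%nat -> x n <= tail (S n).
Hypothesis kakeya_strict_often : forall K, exists q, (K <= q)%nat /\ x q < tail (S q).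

(* A prefix [(e, p)] fixes the choices [e 0, ..., e (p - 1)]. *)
Definition prefix : Type := ((nat -> bool) * nat)%type.
Definition prefix_sum (c : prefix) : R := psum (chosen (fst c)) (snd c).

(* Every point of [[lo, hi]] is reachable from [c]: see [extend_towards]. *)
Definition spans (lo hi : R) (c : prefix) : Prop :=
  (n0 <= snd c)%nat /\ forall v, lo <= v <= hi -> 0 <= v - prefix_sum c <= tail (snd c).

Definition splits (c c0 c1 : prefix) : Prop :=
  exists q, (snd c <= q)%nat /\ snd c0 = S q /\ snd c1 = S q /\
    (forall i, (i < snd c)%nat -> fst c0 i = fst c i /\ fst c1 i = fst c i) /\
    fst c0 q = false /\ fst c1 q = true.

Lemma spans_shrink lo hi lo' hi' c : lo <= lo' -> hi' <= hi -> spans lo hi c -> spans lo' hi' c.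
Proof. intros Hlo Hhi [Hp Hv]. split; auto. intros v Hv'. apply Hv. lra. Qed.

Lemma extend_towards c lo hi v q : spans lo hi c -> lo <= v <= hi -> (snd c <= q)%nat ->
  exists e, (forall i, (i < snd c)%nat -> e i = fst c i) /\ v - tail q <= psum (chosen e) q <= v.
Proof.
  destruct c as [e0 p]. intros [Hp Hspan] Hv Hq. simpl in Hp, Hq |- *.
  specialize (Hspan v Hv). set (t := v - prefix_sum (e0, p)) in Hspan.
  assert (Hk : forall n, (p <= n)%nat -> x n <= tail (S n)) by (intros; apply kakeya; lia).
  set (f := greedy p t). exists (fun i => if (i <? p)%nat then e0 i else f i). split.
  - intros i Hi. destruct (Nat.ltb_spec i p); [auto | lia].
  - assert (Hglue : psum (chosen (fun i => if (i <? p)%nat then e0 i else f i)) q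
                    = psum (chosen e0) p + psum (chosen f) q).
    { rewrite <- psum_glue; [| lia |].
      - apply psum_ext. intros i _. unfold chosen. destruct (i <? p)%nat; auto.
      - intros i Hi. unfold chosen, f. rewrite greedy_below; auto. }
    pose proof (val_greedy p t Hk Hspan) as Hval. rewrite (val_split _ q) in Hval.
    pose proof (chosen_tail_bounds f q).
    rewrite Hglue. unfold f, t, prefix_sum in *. simpl in *. lra.
Qed.

Definition set_bit (e : nat -> bool) (q : nat) (b : bool) (i : nat) : bool :=
  if (i =? q)%nat then b else e i.

Lemma prefix_sum_set_bit e q b :
  prefix_sum (set_bit e q b, S q) = psum (chosen e) q + (if b then x q else 0).
Proof.
  unfold prefix_sum. cbn [fst snd psum]. rewrite (psum_ext _ (chosen e) q).
  - unfold chosen at 2, set_bit. rewrite Nat.eqb_refl. destruct b; ring.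
  - intros i Hi. unfold chosen, set_bit. destruct (Nat.eqb_spec i q); [lia | auto].
Qed.

(* Branch at an index [q] with [x q < tail (S q)] so far out that both children still
   span a common subinterval of [[lo, hi]]. *)
Lemma split_spans c lo hi : lo < hi -> spans lo hi c ->
  exists lo' hi' c0 c1, lo <= lo' /\ lo' < hi' /\ hi' <= hi /\ splits c c0 c1 /\
    spans lo' hi' c0 /\ spans lo' hi' c1.
Proof.
  intros Hlohi Hc.
  destruct (tail_vanishing ((hi - lo) / 2) ltac:(lra)) as [N HN].
  destruct (kakeya_strict_often (Nat.max N (snd c))) as [q [Hq Hstrict]].
  specialize (HN q ltac:(lia)).
  destruct (extend_towards c lo hi ((lo + hi) / 2) q Hc ltac:(lra) ltac:(lia)) as [e [Hpre He]].
  set (S0 := psum (chosen e) q) in He.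
  pose proof (tail_succ q) as Htail. pose proof (x_pos q) as Hxq. pose proof (proj1 Hc) as Hn0.
  pose proof (prefix_sum_set_bit e q false) as Hsum0.
  pose proof (prefix_sum_set_bit e q true) as Hsum1. simpl in Hsum0, Hsum1. fold S0 in Hsum0, Hsum1.
  exists (S0 + x q), (S0 + tail (S q)), (set_bit e q false, S q), (set_bit e q true, S q).
  split; [lra |]. split; [lra |]. split; [lra |]. split; [| split].
  - assert (Hkeep : forall b i, (i < snd c)%nat -> set_bit e q b i = fst c i).
    { intros b i Hi. unfold set_bit. destruct (Nat.eqb_spec i q); [lia | auto]. }
    exists q. simpl. repeat split; try lia; try (apply Hkeep; auto).
    1, 2: unfold set_bit; rewrite Nat.eqb_refl; reflexivity.
  - split; [simpl; lia |]. intros v Hv. rewrite Hsum0. simpl. lra.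
  - split; [simpl; lia |]. intros v Hv. rewrite Hsum1. simpl. lra.
Qed.

Definition no_prefix : prefix := (fun _ => false, O).

Record level : Type := Level { level_lo : R; level_hi : R; level_nodes : list prefix }.

(* Level [d] lists the [2 ^ d] nodes of depth [d]; node [i] has children [2 i] and [2 i + 1]. *)
Definition child (L : list prefix) (i : nat) (b : bool) : prefix :=
  nth (if b then S (2 * i) else 2 * i) L no_prefix.

Definition level_ok (s : level) : Prop :=
  level_lo s < level_hi s /\ forall c, In c (level_nodes s) -> spans (level_lo s) (level_hi s) c.

Definition refines (s s' : level) : Prop :=
  level_lo s <= level_lo s' /\ level_hi s' <= level_hi s /\
  length (level_nodes s') = (2 * length (level_nodes s))%nat /\
  forall i, (i < length (level_nodes s))%nat ->
    splits (nth i (level_nodes s) no_prefix)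
           (child (level_nodes s') i false) (child (level_nodes s') i true).

Lemma child_cons2 c0 c1 L i b : child (c0 :: c1 :: L) (S i) b = child L i b.
Proof.
  unfold child. destruct b.
  - replace (S (2 * S i)) with (S (S (S (2 * i)))) by lia. reflexivity.
  - replace (2 * S i)%nat with (S (S (2 * i))) by lia. reflexivity.
Qed.

Lemma refine_level (L : list prefix) : forall lo hi, level_ok (Level lo hi L) ->
  exists s', level_ok s' /\ refines (Level lo hi L) s'.
Proof.
  induction L as [|c L IH]; intros lo hi [Hlohi HL]; simpl in *.
  - exists (Level lo hi nil). split; [split; [exact Hlohi | intros c []] |].
    repeat split; simpl; try lra. intros i Hi. lia.
  - destruct (split_spans c lo hi Hlohi (HL c (or_introl eq_refl)))
      as [lo1 [hi1 [c0 [c1 [Hlo1 [Hlohi1 [Hhi1 [Hsplit [Hc0 Hc1]]]]]]]]].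
    destruct (IH lo1 hi1) as [[lo2 hi2 L'] [[Hlohi2 HL'] [Hlo2 [Hhi2 [Hlen HL'split]]]]];
      simpl in *.
    { split; auto. intros c' Hc'. apply (spans_shrink lo hi); auto; lra. }
    exists (Level lo2 hi2 (c0 :: c1 :: L')). split; [split |]; simpl.
    + exact Hlohi2.
    + intros c' [<- | [<- | Hc']]; auto; apply (spans_shrink lo1 hi1); auto; lra.
    + unfold refines; simpl. split; [lra |]. split; [lra |]. split; [rewrite Hlen; lia |].
      intros [|i] Hi; [exact Hsplit |]. rewrite !child_cons2. apply HL'split. lia.
Qed.

Lemma exists_refinement_step :
  exists next : level -> level, forall s, level_ok s -> level_ok (next s) /\ refines s (next s).
Proof.
  apply (choice (fun s s' => level_ok s -> level_ok s' /\ refines s s')). intros s.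
  destruct (classic (level_ok s)) as [Hs | Hs].
  - destruct s as [lo hi L]. destruct (refine_level L lo hi Hs) as [s' Hs']. eauto.
  - exists s. tauto.
Qed.

Section Tree.

Variable next : level -> level.
Hypothesis next_spec : forall s, level_ok s -> level_ok (next s) /\ refines s (next s).

Fixpoint level_at (d : nat) : level :=
  match d with
  | O => Level 0 (tail n0) ((fun _ => false, n0) :: nil)
  | S d => next (level_at d)
  end.

Lemma level_at_ok d : level_ok (level_at d).
Proof.
  induction d as [|d IH]; [| apply next_spec, IH].
  split; simpl.
  - rewrite tail_succ. pose proof (x_pos n0). pose proof (tail_ge0 (S n0)). lra.
  - intros c [<- | []]. split; [simpl; lia |]. intros v Hv.
    unfold prefix_sum. rewrite psum_eq0; [simpl; lra | reflexivity].
Qed.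

Lemma level_at_refines d : refines (level_at d) (level_at (S d)).
Proof. apply next_spec, level_at_ok. Qed.

Lemma level_at_length d : length (level_nodes (level_at d)) = (2 ^ d)%nat.
Proof.
  induction d as [|d IH]; [reflexivity |].
  destruct (level_at_refines d) as [_ [_ [-> _]]]. rewrite IH. simpl. lia.
Qed.

Fixpoint code (w : nat -> bool) (d : nat) : nat :=
  match d with O => O | S d => if w d then S (2 * code w d) else (2 * code w d)%nat end.

Lemma code_lt w d : (code w d < 2 ^ d)%nat.
Proof. induction d; simpl; [lia | destruct (w d); lia]. Qed.

Lemma code_prefix w w' d : (forall k, (k < d)%nat -> w k = w' k) -> code w d = code w' d.
Proof. induction d as [|d IH]; intros H; simpl; auto. rewrite IH, H; auto. Qed.

Definition node (w : nat -> bool) (d : nat) : prefix :=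
  nth (code w d) (level_nodes (level_at d)) no_prefix.

Lemma node_spans w d : spans (level_lo (level_at d)) (level_hi (level_at d)) (node w d).
Proof.
  apply (proj2 (level_at_ok d)). unfold node. apply nth_In.
  rewrite level_at_length. apply code_lt.
Qed.

Lemma node_succ w d : node w (S d) = child (level_nodes (level_at (S d))) (code w d) (w d).
Proof. unfold node, child. simpl code. destruct (w d); reflexivity. Qed.

Lemma node_splits w d : splits (node w d)
  (child (level_nodes (level_at (S d))) (code w d) false)
  (child (level_nodes (level_at (S d))) (code w d) true).
Proof.
  apply (proj2 (proj2 (proj2 (level_at_refines d)))).
  rewrite level_at_length. apply code_lt.
Qed.

Lemma node_extends w d : (snd (node w d) < snd (node w (S d)))%nat /\
  forall i, (i < snd (node w d))%nat -> fst (node w (S d)) i = fst (node w d) i.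
Proof.
  destruct (node_splits w d) as [q [Hq [Hl0 [Hl1 [Hagree _]]]]].
  rewrite node_succ. destruct (w d); split; try lia; intros i Hi; apply Hagree; auto.
Qed.

Lemma node_depth w d : (d <= snd (node w d))%nat.
Proof. induction d; [lia |]. pose proof (proj1 (node_extends w d)). lia. Qed.

Lemma node_agree w d d' : (d <= d')%nat ->
  (snd (node w d) <= snd (node w d'))%nat /\
  forall i, (i < snd (node w d))%nat -> fst (node w d') i = fst (node w d) i.
Proof.
  intros H. induction H as [| d' H [IHlen IHagree]]; [split; auto |].
  destruct (node_extends w d') as [Hlen Hagree]. split; [lia |].
  intros i Hi. rewrite Hagree, IHagree; auto. lia.
Qed.

Definition path (w : nat -> bool) (i : nat) : bool := fst (node w (S i)) i.

Lemma path_agree w d i : (i < snd (node w d))%nat -> path w i = fst (node w d) i.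
Proof.
  intros Hi. unfold path.
  assert (Hi' : (i < snd (node w (S i)))%nat) by (pose proof (node_depth w (S i)); lia).
  rewrite <- (proj2 (node_agree w (S i) (Nat.max d (S i)) ltac:(lia)) i Hi').
  apply node_agree; auto. lia.
Qed.

Lemma path_branch_bit w d : exists q, forall w', code w' d = code w d -> path w' q = w' d.
Proof.
  destruct (node_splits w d) as [q [_ [Hl0 [Hl1 [_ [Hb0 Hb1]]]]]].
  exists q. intros w' Hcode.
  assert (Hnode : node w' (S d) = child (level_nodes (level_at (S d))) (code w d) (w' d))
    by (rewrite node_succ, Hcode; reflexivity).
  rewrite (path_agree w' (S d)); rewrite Hnode; destruct (w' d); auto; lia.
Qed.

Lemma path_inj : Injective path.
Proof.
  intros w w' Hpath. apply NNPP. intros Hne.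
  destruct (first_difference w w' Hne) as [d [Hd Hbefore]].
  destruct (path_branch_bit w d) as [q Hq].
  apply Hd. rewrite <- (Hq w eq_refl), <- (Hq w' (eq_sym (code_prefix w w' d Hbefore))), Hpath.
  reflexivity.
Qed.

Lemma val_path y : (forall d, level_lo (level_at d) <= y <= level_hi (level_at d)) ->
  forall w, val (path w) = y.
Proof.
  intros Hy w. apply (eq_of_Rabs_le_vanishing _ _ tail).
  { intros eps Heps. destruct (tail_vanishing eps Heps) as [N HN]. exists N. auto. }
  intros d. set (p := snd (node w d)).
  destruct (node_spans w d) as [_ Hspan]. specialize (Hspan y (Hy d)).
  assert (Hpre : psum (chosen (path w)) p = prefix_sum (node w d)).
  { apply psum_ext. intros i Hi. unfold chosen. rewrite (path_agree w d i Hi). reflexivity. }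
  rewrite (val_split _ p), Hpre.
  pose proof (chosen_tail_bounds (path w) p). pose proof (tail_antitone d p (node_depth w d)).
  fold p in Hspan. unfold Rabs; destruct (Rcase_abs _); lra.
Qed.

End Tree.

Lemma card_range_continuum : card_range x CContinuum.
Proof.
  destruct exists_refinement_step as [next Hnext].
  destruct (nested_intervals (fun d => level_lo (level_at next d)) (fun d => level_hi (level_at next d)))
    as [y Hy].
  - intros d. apply (level_at_refines next Hnext d).
  - intros d. apply (level_at_refines next Hnext d).
  - intros d. apply Rlt_le, (level_at_ok next Hnext d).
  - exists y. split.
    + exists (path next (fun _ => false)). apply reps_iff_val, (val_path next Hnext); auto.
    + apply (has_card_continuum_of_inj _ (path next)); [exact (path_inj next Hnext) |].
      intros w. apply reps_iff_val, (val_path next Hnext); auto.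
Qed.

End CantorScheme.

(* If [x n = tail (S n)] but [x n] is not a strict drop, then [x (n - 1) = x n],
   and index [n - 1] satisfies Kakeya's condition strictly. *)
Lemma kakeya_strict_often n0 : (forall n, (n0 <= n)%nat -> x n <= tail (S n)) ->
  ~ (exists n, (1 <= n)%nat /\ x n < x (n - 1) /\ x n = tail (S n)) ->
  forall K, exists q, (K <= q)%nat /\ x q < tail (S q).
Proof.
  intros Hk Hno K. set (n := S (Nat.max K n0)).
  destruct (Rle_lt_or_eq_dec _ _ (Hk n ltac:(unfold n; lia))) as [Hlt | Heq].
  - exists n. split; [unfold n; lia | exact Hlt].
  - exists (n - 1)%nat. split; [unfold n; lia |].
    assert (Hflat : x (n - 1)%nat <= x n).
    { apply Rnot_lt_le. intros Hdrop. apply Hno. exists n. split; [unfold n; lia | auto]. }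
    replace (S (n - 1)) with n by (unfold n; lia).
    rewrite (tail_succ n). pose proof (x_pos n). lra.
Qed.

Lemma card_range_two_or_continuum b : 0 < b ->
  (forall u, 0 <= u <= b -> achievement_set x u) ->
  card_range x (CFin 2) \/ card_range x CContinuum.
Proof.
  intros Hb Hach. destruct (kakeya_eventually b Hb Hach) as [n0 Hk].
  destruct (classic (exists n, (1 <= n)%nat /\ x n < x (n - 1) /\ x n = tail (S n)))
    as [[n [Hn [Hdrop Heq]]] | Hno].
  - left. exact (card_range_equality_case n Hn Hdrop Heq).
  - right. exact (card_range_continuum n0 Hk (kakeya_strict_often n0 Hk Hno)).
Qed.

End Nonincreasing.

Lemma achievement_set_ge0 (x : nat -> R) y : (forall n, 0 < x n) -> achievement_set x y -> 0 <= y.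
Proof.
  intros Hpos [e He]. rewrite <- (is_series_unique _ _ He).
  apply Series_ge0; [| exists y; exact He].
  intros n. destruct (e n); [apply Rlt_le, Hpos | lra].
Qed.

Lemma achievement_set_comp_bij (x : nat -> R) (s t : nat -> nat) y :
  (forall n, 0 < x n) -> (forall n, s (t n) = n) -> (forall n, t (s n) = n) ->
  achievement_set x y -> achievement_set (fun n => x (s n)) y.
Proof.
  intros Hpos Hst Hts [e He]. exists (fun n => e (s n)).
  apply (reps_comp_bij x s t); auto.
Qed.

Lemma initial_interval (x : nat -> R) : pos_summable x ->
  finite_union_of_intervals (achievement_set x) ->
  exists b, 0 < b /\ forall u, 0 <= u <= b -> achievement_set x u.
Proof.
  intros [Hpos _] [l [Hl Hunion]].
  assert (H0 : achievement_set x 0) by (exists (fun _ => false); apply is_series_zero).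
  destruct (proj1 (Hunion 0) H0) as [[a b] [Hin Hab]]. simpl in Hab.
  specialize (Hl _ Hin). simpl in Hl.
  assert (Hinside : forall u, a <= u <= b -> achievement_set x u)
    by (intros u Hu; apply Hunion; exists (a, b); auto).
  exists b. split.
  - pose proof (achievement_set_ge0 x a Hpos (Hinside a ltac:(lra))). lra.
  - intros u Hu. apply Hinside. lra.
Qed.

Theorem theorem6p1 (M : CardVal -> Prop) :
  in_I M -> M (CFin 2) \/ ~ bounded_cards M.
Proof.
  intros [x [[Hpos Hsum] [Hunion HM]]].
  destruct (initial_interval x (conj Hpos Hsum) Hunion) as [b [Hb Hach]].
  destruct (exists_nonincreasing_rearrangement x Hpos (ex_series_lim_0 x Hsum))
    as [s [t [Hst [Hts Hnonincr]]]].
  assert (Hinj : Injective s) by (intros i j E; rewrite <- (Hts i), E; auto).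
  assert (Hsum_s : ex_series (fun n => x (s n))).
  { apply (Series_comp_inj_le x s); auto. intros n; apply Rlt_le, Hpos. }
  assert (Hrange : forall k, card_range (fun n => x (s n)) k -> M k)
    by (intros k Hk; apply HM, (card_range_comp_bij x s t); auto).
  destruct (card_range_two_or_continuum (fun n => x (s n)) (fun n => Hpos (s n)) Hsum_s
              Hnonincr b Hb (fun u Hu => achievement_set_comp_bij x s t u Hpos Hst Hts (Hach u Hu)))
    as [Htwo | Hcont].
  - left. exact (Hrange _ Htwo).
  - right. intros [N HN]. destruct (HN CContinuum (Hrange _ Hcont)) as [n [Hn _]]. discriminate.
Qed.
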